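(* Let $\mathcal K\subseteq\mathbb R^d$ be closed and convex, $\alpha,\epsilon,L>0$, and let $\ell_1,\dots,\ell_T:\mathcal K\to\mathbb R$ be $(\alpha,\epsilon)$-nearly strongly convex with subgradients bounded in norm by $L$, revealed online together with scales $g_1,\dots,g_T\in[0,1]$ (each possibly chosen adaptively). Run online gradient descent: pick any $x_1\in\mathcal K$, and set $x_{t+1}=\Pi_{\mathcal K}\big(x_t-\eta_tg_t\nabla\ell_t(x_t)\big)$ with $\eta_t=R'(G_t)$, $G_t=\sum_{s\le t}g_s$, where $R'(z)=\frac2\alpha$ for $z\in[0,1]$, $R'(z)=\frac{2}{\alpha z}$ for $z\in\big[1,(\frac{\sqrt2L}{\alpha\epsilon})^2\big]$, and $R'(z)=\frac{\sqrt2\,\epsilon}{L\sqrt z}$ for $z\ge(\frac{\sqrt2L}{\alpha\epsilon})^2$. Then for every $x^*\in\mathcal K$, $$\sum_{t=1}^Tg_t\big(\ell_t(x_t)-\ell_t(x^* )\big)\le2\sqrt2\,\epsilon L\sqrt{G_T}+\frac{L^2}{\alpha}\big(\log(G_T+1)+1\big).$$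
   Context: A continuous function $h$ on a convex set $\mathcal K$ is $(\alpha,\epsilon)$-nearly strongly convex if for all $x,y\in\mathcal K$ and every subgradient $\nabla h(x)$, $h(y)-h(x)-\nabla h(x)^\top(y-x)\ge\frac\alpha2\big(\|y-x\|-\epsilon\big)_+^2$, where $(z)_+=\max(z,0)$. $\Pi_{\mathcal K}$ is Euclidean projection onto $\mathcal K$; $\nabla\ell_t(x_t)$ is any subgradient. *)

From HB Require Import structures.
From mathcomp Require Import all_boot all_order all_algebra.
From mathcomp Require Import all_classical all_reals all_analysis.
Set Implicit Arguments. Unset Strict Implicit. Unset Printing Implicit Defensive.
Import Order.TTheory GRing.Theory Num.Theory numFieldNormedType.Exports.
Local Open Scope classical_set_scope.
Local Open Scope ring_scope.

Section Defs.
Context {R : realType} {d : nat}.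

Definition dotv (u v : 'rV[R]_d) : R := \sum_(i < d) u ord0 i * v ord0 i.
Definition enorm (u : 'rV[R]_d) : R := Num.sqrt (dotv u u).

Definition convex_set_rV (K : set 'rV[R]_d) : Prop :=
  forall x y, K x -> K y -> forall l : R, 0 <= l <= 1 ->
    K (l *: x + (1 - l) *: y).

Definition is_subgradient (K : set 'rV[R]_d) (h : 'rV[R]_d -> R)
    (x v : 'rV[R]_d) : Prop :=
  forall y, K y -> h x + dotv v (y - x) <= h y.

Definition nearly_strongly_convex (K : set 'rV[R]_d) (alpha eps : R)
    (h : 'rV[R]_d -> R) : Prop :=
  {within K, continuous h} /\
  forall x y v, K x -> K y -> is_subgradient K h x v ->
    alpha / 2 * (Num.max (enorm (y - x) - eps) 0) ^+ 2
      <= h y - h x - dotv v (y - x).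

Definition is_proj (K : set 'rV[R]_d) (z p : 'rV[R]_d) : Prop :=
  K p /\ forall y, K y -> enorm (p - z) <= enorm (y - z).

End Defs.

Definition Rprime {R : realType} (alpha eps L z : R) : R :=
  if z <= 1 then 2 / alpha
  else if z <= (Num.sqrt 2 * L / (alpha * eps)) ^+ 2 then 2 / (alpha * z)
  else Num.sqrt 2 * eps / (L * Num.sqrt z).

Definition cumG {R : realType} (g : nat -> R) (t : nat) : R :=
  \sum_(1 <= s < t.+1) g s.

From HB Require Import structures.
From mathcomp Require Import all_boot all_order all_algebra.
From mathcomp Require Import all_classical all_reals all_analysis.
From mathcomp Require Import ring lra.
Import Order.TTheory GRing.Theory Num.Theory numFieldNormedType.Exports.
Local Open Scope classical_set_scope.
Local Open Scope ring_scope.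

(* Let G be the running sum of the scales, X^2 the threshold in R', and
   m(G) = (alpha/4) min(G, X sqrt G); then 2 m(G) R'(G) = 1 as soon as G > 1, and m increases
   by at most alpha g/4 in a round of scale g.  By the projection inequality, the weighted loss
   gap of round t plus m(G_t)|x_(t+1) - x*|^2 - m(G_(t-1))|x_t - x*|^2 is controlled by the
   subgradient term; the curvature (alpha/2)(|x_t - x*| - eps)_+^2 of near strong convexity
   absorbs the growth of the weight up to 2 eps^2 (m(G_t) - m(G_(t-1))), and in each of the three
   regimes of R' the remaining error is paid by the increment of eps L e(G) + (L^2/alpha) psi(G),
   where e grows like 2G and then like sqrt(2G), and psi like G and then like 1 + ln G.
   Telescoping, the regret is at most 2 eps^2 m(G_T) + eps L e(G_T) + (L^2/alpha) psi(G_T).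
   Below, m, e, psi and this potential are [dist_weight], [sqrt_potential], [log_potential] and
   [regret_potential]. *)

Section EuclideanGeometry.
Context {R : realType} {d : nat}.
Implicit Types (u v w z p y : 'rV[R]_d) (K : set 'rV[R]_d).

Lemma dotvC u v : dotv u v = dotv v u.
Proof. by apply: eq_bigr => i _; rewrite mulrC. Qed.

Lemma dotvDl u v w : dotv (u + v) w = dotv u w + dotv v w.
Proof. by rewrite /dotv -big_split; apply: eq_bigr => i _; rewrite mxE mulrDl. Qed.

Lemma dotvZl (a : R) u w : dotv (a *: u) w = a * dotv u w.
Proof. by rewrite /dotv mulr_sumr; apply: eq_bigr => i _; rewrite mxE mulrA. Qed.

Lemma dotvDr u v w : dotv w (u + v) = dotv w u + dotv w v.
Proof. by rewrite dotvC dotvDl !(dotvC w). Qed.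

Lemma dotvZr (a : R) u w : dotv w (a *: u) = a * dotv w u.
Proof. by rewrite dotvC dotvZl dotvC. Qed.

Lemma dotv_lincomb (s t : R) u v :
  dotv (s *: u + t *: v) (s *: u + t *: v) =
  s ^+ 2 * dotv u u + 2 * s * t * dotv u v + t ^+ 2 * dotv v v.
Proof. by rewrite !dotvDl !dotvDr !dotvZl !dotvZr (dotvC v u); ring. Qed.

Lemma dotv_ge0 u : 0 <= dotv u u.
Proof. by apply: sumr_ge0 => i _; rewrite -expr2 sqr_ge0. Qed.

Lemma enorm_ge0 u : 0 <= enorm u.
Proof. exact: sqrtr_ge0. Qed.

Lemma enorm_sqr u : enorm u ^+ 2 = dotv u u.
Proof. by rewrite sqr_sqrtr // dotv_ge0. Qed.

Lemma enormN u : enorm (- u) = enorm u.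
Proof.
by rewrite /enorm /dotv; congr Num.sqrt; apply: eq_bigr => i _; rewrite mxE mulrNN.
Qed.

Lemma enorm_eq0 u : enorm u = 0 -> u = 0.
Proof.
move=> /(congr1 (fun a => a ^+ 2)); rewrite enorm_sqr expr0n /= => u0.
apply/rowP => i; rewrite mxE; apply/eqP; rewrite -sqrf_eq0 expr2.
by apply/eqP; apply: (psumr_eq0P _ u0) => // k _; rewrite -expr2 sqr_ge0.
Qed.

Lemma dotv_le_enorm u v : dotv u v <= enorm u * enorm v.
Proof.
have [ab0 | ab_neq0] := eqVneq (enorm u * enorm v) 0.
  move: ab0 => /eqP; rewrite mulf_eq0 => /orP[] /eqP /enorm_eq0 ->.
    by rewrite /dotv big1 ?mulr_ge0 ?enorm_ge0 // => i _; rewrite mxE mul0r.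
  by rewrite /dotv big1 ?mulr_ge0 ?enorm_ge0 // => i _; rewrite mxE mulr0.
have ab_gt0 : 0 < enorm u * enorm v by rewrite lt_def ab_neq0 mulr_ge0 ?enorm_ge0.
have := dotv_ge0 (enorm v *: u + (- enorm u) *: v).
rewrite dotv_lincomb -!enorm_sqr => h.
have : 0 <= (enorm u * enorm v) * (enorm u * enorm v - dotv u v) by nra.
by rewrite pmulr_rge0 // subr_ge0.
Qed.

Lemma proj_variational {K z p y} : convex_set_rV K -> is_proj K z p -> K y ->
  0 <= dotv (p - z) (y - p).
Proof.
move=> convK [Kp p_min] Ky.
set A := dotv (p - z) (p - z); set B := dotv (p - z) (y - p).
set N := dotv (y - p) (y - p).
have N_ge0 : 0 <= N by exact: dotv_ge0.
(* moving from p towards y by a fraction l cannot bring us closer to z *)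
have toward_y l : 0 < l <= 1 -> 0 <= 2 * B + l * N.
  move=> /andP[l_gt0 l_le1].
  have := p_min _ (convK y p Ky Kp l (introT andP (conj (ltW l_gt0) l_le1))).
  rewrite /enorm ler_sqrt ?dotv_ge0 //.
  have -> : l *: y + (1 - l) *: p - z = 1 *: (p - z) + l *: (y - p).
    by apply/matrixP => i j; rewrite !mxE; ring.
  rewrite dotv_lincomb -/A -/B -/N => h.
  have : 0 <= l * (2 * B + l * N) by nra.
  by rewrite pmulr_rge0.
rewrite leNgt; apply/negP => B_lt0.
have NB_gt0 : 0 < N - B by lra.
set l := - B / (N - B).
have hl : l * (N - B) = - B by rewrite mulfVK // gt_eqF.
have l_gt0 : 0 < l by rewrite divr_gt0 // oppr_gt0.
have l_le1 : l <= 1 by rewrite ler_pdivrMr // mul1r; lra.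
have := toward_y l (introT andP (conj l_gt0 l_le1)).
have : 0 < N - 2 * B by lra.
nra.
Qed.

Lemma proj_dist_le {K z p y} : convex_set_rV K -> is_proj K z p -> K y ->
  dotv (p - y) (p - y) <= dotv (z - y) (z - y).
Proof.
move=> convK projp Ky.
have obtuse := proj_variational convK projp Ky.
have -> : z - y = 1 *: (p - y) + (-1) *: (p - z).
  by apply/matrixP => i j; rewrite !mxE; ring.
rewrite dotv_lincomb.
have -> : dotv (p - y) (p - z) = - dotv (p - z) (y - p).
  by rewrite -[p - y]opprB -scaleN1r dotvZl dotvC mulN1r.
have := dotv_ge0 (p - z); lra.
Qed.

Lemma proj_step_dist {K x v p y} {a : R} : convex_set_rV K ->
  is_proj K (x - a *: v) p -> K y ->
  dotv (p - y) (p - y)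
    <= enorm (x - y) ^+ 2 - 2 * a * dotv v (x - y) + a ^+ 2 * dotv v v.
Proof.
move=> convK projp Ky; apply: le_trans (proj_dist_le convK projp Ky) _.
have -> : x - a *: v - y = 1 *: (x - y) + (- a) *: v.
  by apply/matrixP => i j; rewrite !mxE; ring.
rewrite dotv_lincomb enorm_sqr (dotvC (x - y)); lra.
Qed.

Lemma nearly_strongly_convex_gap {K} {alpha eps : R} {h x v y} :
  nearly_strongly_convex K alpha eps h -> K x -> K y -> is_subgradient K h x v ->
  h x - h y <= dotv v (x - y) - alpha / 2 * (Num.max (enorm (x - y) - eps) 0) ^+ 2.
Proof.
move=> [_ nsc] Kx Ky subv; have := nsc x y v Kx Ky subv.
rewrite -enormN opprB (_ : y - x = (-1) *: (x - y)) ?dotvZr; first lra.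
by rewrite scaleN1r opprB.
Qed.

End EuclideanGeometry.

Definition log_potential {R : realType} (G : R) : R :=
  if G <= 1 then G else 1 + ln G.

Definition sqrt_potential {R : realType} (G : R) : R :=
  if G <= 1 then 2 * G else 2 + Num.sqrt 2 * (Num.sqrt G - 1).

Definition sqrt_cap {R : realType} (X G : R) : R := Num.min G (X * Num.sqrt G).

Section Potentials.
Context {R : realType}.
Implicit Types x G g X : R.

Lemma sqrt2_sqr : Num.sqrt 2 ^+ 2 = 2 :> R.
Proof. by rewrite sqr_sqrtr. Qed.

Lemma sqrt2_gt0 : 0 < Num.sqrt 2 :> R.
Proof. by rewrite sqrtr_gt0. Qed.

Lemma sqrt2_bounds : 4 / 3 <= Num.sqrt 2 :> R /\ Num.sqrt 2 <= 2 :> R.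
Proof. by have := @sqrt2_sqr; have := @sqrt2_gt0; split; nra. Qed.

Lemma sqrt_ge1 {G} : 1 <= G -> 1 <= Num.sqrt G.
Proof. by move=> G_ge1; rewrite -sqrtr1 ler_sqrt //; lra. Qed.

Lemma sqrt_le1 {G} : 0 <= G -> G <= 1 -> Num.sqrt G <= 1.
Proof. by move=> G_ge0 G_le1; rewrite -sqrtr1 ler_sqrt. Qed.

Lemma sqrt_mono {G' G} : 0 <= G' -> G' <= G -> Num.sqrt G' <= Num.sqrt G.
Proof. by move=> G'_ge0 G'G; rewrite ler_sqrt //; lra. Qed.

Lemma subr_invr_le_ln x : 0 < x -> 1 - x^-1 <= ln x.
Proof.
move=> x_gt0; have := @le_ln1Dx R (x^-1 - 1).
rewrite [1 + _]addrC subrK lnV ?posrE //.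
have : 0 < x^-1 by rewrite invr_gt0.
lra.
Qed.

Lemma log_potential0 : log_potential 0 = 0 :> R.
Proof. by rewrite /log_potential ler01. Qed.

Lemma log_potential_mono G' G : 0 <= G' -> G' <= G ->
  log_potential G' <= log_potential G.
Proof.
move=> G'_ge0 G'G; rewrite /log_potential.
case: (leP G 1) => G1; first by rewrite (le_trans G'G G1).
have := @ln_ge0 R G; case: (leP G' 1) => G'1; first lra.
by rewrite lerD2l ler_ln ?posrE; lra.
Qed.

Lemma log_potential_step {G' g} : 0 <= G' -> 0 <= g -> 1 < G' + g ->
  g / (G' + g) <= log_potential (G' + g) - log_potential G'.
Proof.
move=> G'_ge0 g_ge0 G_gt1; have G_gt0 : 0 < G' + g by lra.
rewrite /log_potential (lt_geF G_gt1).
case: (leP G' 1) => G'1.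
  have := subr_invr_le_ln (G' + g) G_gt0.
  have -> : g / (G' + g) = 1 - G' / (G' + g) by field; lra.
  have : 0 <= (1 - G') * (1 - (G' + g)^-1).
    by apply: mulr_ge0; rewrite subr_ge0 // invf_le1; lra.
  have -> : (1 - G') * (1 - (G' + g)^-1) = 1 - (G' + g)^-1 - G' + G' / (G' + g).
    by ring.
  lra.
have := subr_invr_le_ln _ (divr_gt0 G_gt0 (lt_trans ltr01 G'1)).
rewrite lnM ?posrE ?invr_gt0 //; try lra.
rewrite lnV ?posrE; last lra.
rewrite invf_div (_ : G' / (G' + g) = 1 - g / (G' + g)); first lra.
by field; lra.
Qed.

Lemma log_potential_le G : 0 <= G -> log_potential G <= 1 + ln (G + 1).
Proof.
move=> G_ge0; rewrite /log_potential.
have := @ln_ge0 R (G + 1); case: (leP G 1) => G1; first lra.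
by rewrite lerD2l ler_ln ?posrE; lra.
Qed.

Lemma sqrt_potential0 : sqrt_potential 0 = 0 :> R.
Proof. by rewrite /sqrt_potential ler01 mulr0. Qed.

Lemma sqrt_potential_mono G' G : 0 <= G' -> G' <= G ->
  sqrt_potential G' <= sqrt_potential G.
Proof.
move=> G'_ge0 G'G; rewrite /sqrt_potential.
have [s2_lb _] := sqrt2_bounds.
case: (leP G 1) => G1; first by rewrite (le_trans G'G G1); lra.
have := sqrt_ge1 (ltW G1); case: (leP G' 1) => G'1; first nra.
by have := sqrt_mono G'_ge0 G'G; nra.
Qed.

Lemma sqrt_potential_step {G' G} : 0 <= G' -> G' <= G -> 1 < G ->
  Num.sqrt 2 * (Num.sqrt G - Num.sqrt G') <= sqrt_potential G - sqrt_potential G'.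
Proof.
move=> G'_ge0 G'G G1; rewrite /sqrt_potential (lt_geF G1).
have [s2_lb s2_ub] := sqrt2_bounds.
case: (leP G' 1) => G'1; last lra.
have q_ge0 : 0 <= Num.sqrt G' := sqrtr_ge0 _.
have q_le1 := sqrt_le1 G'_ge0 G'1.
rewrite -[in 2 * G'](sqr_sqrtr G'_ge0).
(* [2 - 2 G' = 2 (1 - sqrt G') (1 + sqrt G') >= sqrt 2 (1 - sqrt G')] *)
have : 0 <= (1 - Num.sqrt G') * (2 + 2 * Num.sqrt G' - Num.sqrt 2).
  by apply: mulr_ge0; lra.
nra.
Qed.

Lemma sqrt_potential_le G : 0 <= G ->
  sqrt_potential G <= 3 / 2 * Num.sqrt 2 * Num.sqrt G.
Proof.
move=> G_ge0; rewrite /sqrt_potential.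
have [s2_lb s2_ub] := sqrt2_bounds.
have q_ge0 : 0 <= Num.sqrt G := sqrtr_ge0 _.
case: (leP G 1) => G1; last by have := sqrt_ge1 (ltW G1); nra.
rewrite -[in 2 * G](sqr_sqrtr G_ge0); have := sqrt_le1 G_ge0 G1; nra.
Qed.

Section SqrtCap.
Context {X : R} (X_ge0 : 0 <= X).

Lemma sqrt_cap0 : sqrt_cap X 0 = 0.
Proof. by rewrite /sqrt_cap sqrtr0 mulr0 minxx. Qed.

Lemma sqrt_cap_ge0 G : 0 <= G -> 0 <= sqrt_cap X G.
Proof. by move=> G_ge0; rewrite le_min G_ge0 mulr_ge0 ?sqrtr_ge0. Qed.

Lemma sqrt_cap_le_sqrt G : sqrt_cap X G <= X * Num.sqrt G.
Proof. by rewrite ge_min lexx orbT. Qed.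

Lemma sqrt_cap_mono G' G : 0 <= G' -> G' <= G -> sqrt_cap X G' <= sqrt_cap X G.
Proof.
move=> G'_ge0 G'G; rewrite le_min !ge_min G'G /=.
by rewrite ler_wpM2l ?sqrt_mono ?orbT.
Qed.

Lemma sqrt_cap_increment G' G : 0 <= G' -> G' <= G ->
  sqrt_cap X G - sqrt_cap X G' <= G - G'.
Proof.
move=> G'_ge0 G'G.
have [capG' | ] := boolP (G' <= X * Num.sqrt G').
  rewrite [sqrt_cap X G']/sqrt_cap min_l //.
  have : sqrt_cap X G <= G by rewrite ge_min lexx.
  lra.
rewrite -ltNge => capG'; rewrite [sqrt_cap X G']/sqrt_cap (min_r (ltW capG')).
have := sqrt_cap_le_sqrt G.
have q'_ge0 : 0 <= Num.sqrt G' := sqrtr_ge0 _.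
have qq := sqrt_mono G'_ge0 G'G.
have eG : Num.sqrt G ^+ 2 = G by rewrite sqr_sqrtr //; lra.
have eG' : Num.sqrt G' ^+ 2 = G' by rewrite sqr_sqrtr.
(* [X * sqrt G' < G'] forces [X < sqrt G'], so the square-root branch grows slower than [G] *)
have X_lt : X < Num.sqrt G'.
  have : X * Num.sqrt G' < Num.sqrt G' * Num.sqrt G' by rewrite -expr2 eG'.
  nra.
have : X * (Num.sqrt G - Num.sqrt G') <=
       (Num.sqrt G - Num.sqrt G') * (Num.sqrt G + Num.sqrt G').
  by rewrite mulrC ler_wpM2l ?subr_ge0 //; have := sqrtr_ge0 G; lra.
rewrite mulrBr -subr_sqr eG eG'; lra.
Qed.

Lemma sqrt_capE_linear G : 0 <= G -> G <= X ^+ 2 -> sqrt_cap X G = G.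
Proof.
move=> G_ge0 GX; rewrite /sqrt_cap min_l //.
have q_le : Num.sqrt G <= X.
  by rewrite -[X in _ <= X]ger0_norm // -sqrtr_sqr ler_sqrt ?sqr_ge0.
by rewrite -{1}(sqr_sqrtr G_ge0) expr2 ler_wpM2r ?sqrtr_ge0.
Qed.

Lemma sqrt_capE_sqrt G : X ^+ 2 <= G -> sqrt_cap X G = X * Num.sqrt G.
Proof.
move=> XG; have G_ge0 : 0 <= G by apply: le_trans XG; exact: sqr_ge0.
rewrite /sqrt_cap min_r //.
have q_ge : X <= Num.sqrt G.
  by rewrite -[X in X <= _]ger0_norm // -sqrtr_sqr ler_sqrt.
by rewrite -{2}(sqr_sqrtr G_ge0) expr2 ler_wpM2r ?sqrtr_ge0.
Qed.

End SqrtCap.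
End Potentials.

Lemma curvature_absorbs_growth {R : realType} {alpha eps g Del b D : R} :
  0 < alpha -> 0 < eps -> 0 <= g -> 0 <= Del -> Del <= alpha * g / 4 ->
  0 <= b -> 0 <= D ->
  Del * D ^+ 2 + b * g * D - g * alpha / 2 * (Num.max (D - eps) 0) ^+ 2
    <= 2 * eps ^+ 2 * Del + 2 * b * g * eps + b ^+ 2 * g / alpha.
Proof.
move=> alpha_gt0 eps_gt0 g_ge0 Del_ge0 Del_le b_ge0 D_ge0.
have b2g_ge0 : 0 <= b ^+ 2 * g / alpha.
  by rewrite divr_ge0 ?mulr_ge0 ?sqr_ge0 // ltW.
have [D_le | D_gt] := leP D eps.
  rewrite max_r; last lra.
  have : Del * D ^+ 2 <= Del * eps ^+ 2 by rewrite ler_wpM2l // lerXn2r ?nnegrE; lra.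
  have : b * g * D <= b * g * eps by rewrite ler_wpM2l ?mulr_ge0.
  have := mulr_ge0 Del_ge0 (sqr_ge0 eps); have := mulr_ge0 (mulr_ge0 b_ge0 g_ge0) (ltW eps_gt0).
  lra.
rewrite max_l; last lra.
have [g0 | g_neq0] := eqVneq g 0.
  rewrite g0 mulr0 mul0r in Del_le *.
  have -> : Del = 0 by apply/eqP; rewrite eq_le Del_ge0 andbT.
  by rewrite !(mulr0, mul0r, subr0, addr0).
have g_gt0 : 0 < g by rewrite lt_def g_neq0.
set k := g * alpha / 2; set u := D - eps.
have -> : D = u + eps by rewrite subrK.
(* times [2 k], the slack is [(k u - 2 Del eps - b g)^2 + 2 (k - 2 Del) (Del eps^2 + eps b g)
   + 2 k (k/2 - Del) u^2], a sum of nonnegative terms since [Del <= k/2] *)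
have h1 := sqr_ge0 (k * u - 2 * Del * eps - b * g).
have h2 : 0 <= (k - 2 * Del) * (Del * eps ^+ 2 + eps * (b * g)).
  apply: mulr_ge0; first by rewrite /k; lra.
  by rewrite addr_ge0 ?mulr_ge0 ?sqr_ge0 // ltW.
have h3 : 0 <= (k / 2 - Del) * u ^+ 2 by rewrite mulr_ge0 ?sqr_ge0 //; rewrite /k; lra.
have k2_gt0 : 0 < 2 * k by rewrite /k; apply: mulr_gt0 => //; apply: divr_gt0 => //; exact: mulr_gt0.
rewrite -subr_ge0 -(pmulr_rge0 _ k2_gt0).
have b2g : 2 * k * (b ^+ 2 * g / alpha) = (b * g) ^+ 2 by rewrite /k; field; rewrite gt_eqF.
nra.
Qed.

Definition dist_weight {R : realType} (alpha eps L G : R) : R :=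
  alpha / 4 * sqrt_cap (Num.sqrt 2 * L / (alpha * eps)) G.

Definition schedule_ratio {R : realType} (alpha eps L G : R) : R :=
  2 * dist_weight alpha eps L G * Rprime alpha eps L G.

Definition step_error {R : realType} (alpha eps L g eta th : R) : R :=
  2 * (1 - th) * L * g * eps + ((1 - th) * L) ^+ 2 * g / alpha
  + th * eta * g ^+ 2 * L ^+ 2 / 2.

Definition potential_gain {R : realType} (alpha eps L G' G : R) : R :=
  eps * L * (sqrt_potential G - sqrt_potential G')
  + L ^+ 2 / alpha * (log_potential G - log_potential G').

Definition regret_potential {R : realType} (alpha eps L G : R) : R :=
  2 * eps ^+ 2 * dist_weight alpha eps L G + eps * L * sqrt_potential G
  + L ^+ 2 / alpha * log_potential G.

Section Schedule.
Context {R : realType} {alpha eps L : R}.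
Hypotheses (alpha_gt0 : 0 < alpha) (eps_gt0 : 0 < eps) (L_gt0 : 0 < L).

Local Notation dist_weight := (dist_weight alpha eps L).
Local Notation schedule_ratio := (schedule_ratio alpha eps L).
Local Notation step_error := (step_error alpha eps L).
Local Notation potential_gain := (potential_gain alpha eps L).
Local Notation regret_potential := (regret_potential alpha eps L).

(* [X^2] is the threshold in [Rprime]: above it the step size is [sqrt 2 eps / (L sqrt z)]. *)
Let X := Num.sqrt 2 * L / (alpha * eps).

Let X_ge0 : 0 <= X.
Proof. by rewrite divr_ge0 ?mulr_ge0 ?ltW ?sqrt2_gt0. Qed.

Lemma dist_weight0 : dist_weight 0 = 0.
Proof. by rewrite /dist_weight sqrt_cap0 mulr0. Qed.

Lemma dist_weight_ge0 {G} : 0 <= G -> 0 <= dist_weight G.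
Proof. by move=> G_ge0; rewrite mulr_ge0 ?(sqrt_cap_ge0 X_ge0) ?divr_ge0 // ltW. Qed.

Lemma dist_weight_mono {G' G} : 0 <= G' -> G' <= G -> dist_weight G' <= dist_weight G.
Proof. by move=> G'_ge0 G'G; rewrite ler_wpM2l ?(sqrt_cap_mono X_ge0) ?divr_ge0 // ltW. Qed.

Lemma dist_weight_increment {G' g} : 0 <= G' -> 0 <= g ->
  dist_weight (G' + g) - dist_weight G' <= alpha * g / 4.
Proof.
move=> G'_ge0 g_ge0; have G'G : G' <= G' + g by rewrite lerDl.
have := sqrt_cap_increment (X := X) _ _ G'_ge0 G'G.
rewrite /dist_weight -mulrBr addrAC subrr add0r => cap_le.
rewrite mulrAC; apply: ler_wpM2r; first by rewrite invr_ge0.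
by apply: ler_wpM2l; first exact: ltW.
Qed.

Lemma Rprime_gt0 z : 0 < Rprime alpha eps L z.
Proof.
rewrite /Rprime; case: ifPn => [_ | ]; first by rewrite divr_gt0.
rewrite -ltNge => z_gt1; have z_gt0 : 0 < z by lra.
case: ifP => _; first by rewrite divr_gt0 ?mulr_gt0.
by rewrite divr_gt0 ?mulr_gt0 ?sqrt2_gt0 ?sqrtr_gt0.
Qed.

Lemma schedule_ratio_small G : 0 <= G -> G <= 1 -> schedule_ratio G = sqrt_cap X G.
Proof.
move=> G_ge0 G_le1; rewrite /schedule_ratio /Rprime G_le1 /dist_weight.
by field; rewrite gt_eqF.
Qed.

Lemma schedule_ratio_large G : 1 < G -> schedule_ratio G = 1.
Proof.
move=> G_gt1; have G_gt0 : 0 < G by lra.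
rewrite /schedule_ratio /Rprime (lt_geF G_gt1) /dist_weight -/X.
case: ifPn => [GX | ].
  by rewrite sqrt_capE_linear ?(ltW G_gt0) //; field; rewrite !gt_eqF.
rewrite -ltNge => /ltW XG; rewrite sqrt_capE_sqrt //.
have sqrtG_gt0 : 0 < Num.sqrt G by rewrite sqrtr_gt0.
transitivity (Num.sqrt 2 ^+ 2 / 2 : R); last by rewrite sqrt2_sqr divff.
by rewrite /X; field; rewrite !gt_eqF.
Qed.

Lemma step_error_small th g : 0 <= th <= 1 -> 0 <= g <= 1 ->
  step_error g (2 / alpha) th <= eps * L * (2 * g) + L ^+ 2 / alpha * g.
Proof.
move=> /andP[th_ge0 th_le1] /andP[g_ge0 g_le1].
have -> : step_error g (2 / alpha) th =
    (1 - th) * (eps * L * (2 * g)) + L ^+ 2 / alpha * ((1 - th) ^+ 2 * g + th * g ^+ 2).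
  by rewrite /step_error; field; rewrite gt_eqF.
have La_ge0 : 0 <= L ^+ 2 / alpha by rewrite divr_ge0 ?sqr_ge0 // ltW.
have : 0 <= eps * L * (2 * g) by rewrite !mulr_ge0 // ltW.
have : (1 - th) ^+ 2 * g + th * g ^+ 2 <= g.
  have : 0 <= g * (th * (2 - th - g)) by rewrite !mulr_ge0 //; lra.
  nra.
move=> /(ler_wpM2l La_ge0); nra.
Qed.

Lemma step_error_harmonic {g G} : 0 <= g <= 1 -> 0 < G ->
  step_error g (2 / (alpha * G)) 1 <= L ^+ 2 / alpha * (g / G).
Proof.
move=> /andP[g_ge0 g_le1] G_gt0.
have -> : step_error g (2 / (alpha * G)) 1 = L ^+ 2 / alpha * (g ^+ 2 / G).
  by rewrite /step_error; field; rewrite !gt_eqF.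
apply: ler_wpM2l; first by rewrite divr_ge0 ?sqr_ge0 ?ltW.
apply: ler_wpM2r; first by rewrite invr_ge0 ltW.
by rewrite expr2 ler_piMr.
Qed.

Lemma step_error_sqrt {g G'} : 0 <= g <= 1 -> 0 <= G' -> 0 < G' + g ->
  step_error g (Num.sqrt 2 * eps / (L * Num.sqrt (G' + g))) 1
    <= eps * L * (Num.sqrt 2 * (Num.sqrt (G' + g) - Num.sqrt G')).
Proof.
move=> /andP[g_ge0 g_le1] G'_ge0 G_gt0.
set q := Num.sqrt (G' + g); set q' := Num.sqrt G'.
have q_gt0 : 0 < q by rewrite sqrtr_gt0.
have q'_ge0 : 0 <= q' := sqrtr_ge0 _.
have q'_le : q' <= q by rewrite sqrt_mono //; lra.
have -> : step_error g (Num.sqrt 2 * eps / (L * q)) 1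
    = eps * L * (Num.sqrt 2 * (g ^+ 2 / (2 * q))).
  by rewrite /step_error; field; rewrite !gt_eqF.
apply: ler_wpM2l; first by rewrite mulr_ge0 ?ltW.
apply: ler_wpM2l; first exact: ltW sqrt2_gt0.
rewrite ler_pdivrMr; last lra.
(* [g = q^2 - q'^2 = (q - q')(q + q')] and [g^2 <= g] *)
have : g = (q - q') * (q + q').
  by rewrite -subr_sqr !sqr_sqrtr //; [ring | lra].
nra.
Qed.

Lemma schedule_step {G' g} : 0 <= G' -> 0 <= g <= 1 ->
  schedule_ratio (G' + g) <= 1 /\
  step_error g (Rprime alpha eps L (G' + g)) (schedule_ratio (G' + g))
    <= potential_gain G' (G' + g).
Proof.
move=> G'_ge0 g01; have /andP[g_ge0 g_le1] := g01.
have G_ge0 : 0 <= G' + g by lra.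
have eL_ge0 : 0 <= eps * L by rewrite mulr_ge0 ?ltW.
have La_ge0 : 0 <= L ^+ 2 / alpha by rewrite divr_ge0 ?sqr_ge0 ?ltW.
have sqrt_gain : 0 <= sqrt_potential (G' + g) - sqrt_potential G'.
  by rewrite subr_ge0 sqrt_potential_mono //; lra.
have log_gain : 0 <= log_potential (G' + g) - log_potential G'.
  by rewrite subr_ge0 log_potential_mono //; lra.
rewrite /potential_gain.
have [G_le1 | G_gt1] := leP (G' + g) 1.
  rewrite schedule_ratio_small // {1}/Rprime G_le1.
  have cap_le : sqrt_cap X (G' + g) <= G' + g by rewrite ge_min lexx.
  have cap_ge0 := sqrt_cap_ge0 X_ge0 _ G_ge0.
  split; first lra.
  rewrite /sqrt_potential /log_potential G_le1 (le_trans _ G_le1) ?lerDl //.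
  rewrite (_ : 2 * (G' + g) - 2 * G' = 2 * g); last by ring.
  rewrite (_ : G' + g - G' = g); last by ring.
  by apply: step_error_small => //; apply/andP; split => //; lra.
rewrite schedule_ratio_large //; split => //.
have G_gt0 : 0 < G' + g by lra.
rewrite /Rprime (lt_geF G_gt1); case: ifP => _.
  have := step_error_harmonic g01 G_gt0.
  have := ler_wpM2l La_ge0 (log_potential_step G'_ge0 g_ge0 G_gt1).
  have := mulr_ge0 eL_ge0 sqrt_gain; lra.
have := step_error_sqrt g01 G'_ge0 G_gt0.
have G'G : G' <= G' + g by rewrite lerDl.
have := ler_wpM2l eL_ge0 (sqrt_potential_step G'_ge0 G'G G_gt1).
have := mulr_ge0 La_ge0 log_gain; lra.
Qed.

Lemma potential_step {g r s Q' N mt mp eta D} :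
  0 <= g -> 0 <= D -> N <= L ^+ 2 ->
  0 <= mp -> mp <= mt -> mt - mp <= alpha * g / 4 ->
  0 <= eta -> 2 * mt * eta <= 1 ->
  Q' <= D ^+ 2 - 2 * eta * g * s + eta ^+ 2 * g ^+ 2 * N ->
  r <= s - alpha / 2 * (Num.max (D - eps) 0) ^+ 2 ->
  s <= L * D ->
  g * r + mt * Q' - mp * D ^+ 2
    <= 2 * eps ^+ 2 * (mt - mp) + step_error g eta (2 * mt * eta).
Proof.
move=> g_ge0 D_ge0 N_le mp_ge0 mp_le dm_le eta_ge0 th_le1 dist loss lin.
set th := 2 * mt * eta.
have mt_ge0 : 0 <= mt by lra.
have th_ge0 : 0 <= th by rewrite !mulr_ge0.
have th_le1' : 0 <= 1 - th by rewrite subr_ge0.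
have dm_ge0 : 0 <= mt - mp by rewrite subr_ge0.
have dist' : mt * Q' <= mt * D ^+ 2 - th * g * s + th * eta * g ^+ 2 * L ^+ 2 / 2.
  have := ler_wpM2l mt_ge0 dist.
  have : th * eta * g ^+ 2 * N / 2 <= th * eta * g ^+ 2 * L ^+ 2 / 2.
    by rewrite ler_wpM2r // ler_wpM2l // !mulr_ge0 ?sqr_ge0.
  have -> : mt * (D ^+ 2 - 2 * eta * g * s + eta ^+ 2 * g ^+ 2 * N) =
    mt * D ^+ 2 - th * g * s + th * eta * g ^+ 2 * N / 2 by rewrite /th; field.
  lra.
have loss' : g * r <= g * s - g * alpha / 2 * (Num.max (D - eps) 0) ^+ 2.
  by have := ler_wpM2l g_ge0 loss; lra.
have lin' : (1 - th) * g * s <= (1 - th) * L * g * D.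
  by have := ler_wpM2l (mulr_ge0 th_le1' g_ge0) lin; lra.
have b_ge0 : 0 <= (1 - th) * L by rewrite mulr_ge0 // ltW.
have := curvature_absorbs_growth alpha_gt0 eps_gt0 g_ge0
  dm_ge0 dm_le b_ge0 D_ge0.
rewrite /step_error -/th; lra.
Qed.

Lemma regret_potential0 : regret_potential 0 = 0.
Proof.
by rewrite /regret_potential dist_weight0 sqrt_potential0 log_potential0 !mulr0 !addr0.
Qed.

Lemma regret_potential_le {G} : 0 <= G ->
  regret_potential G <= 2 * Num.sqrt 2 * eps * L * Num.sqrt G
                        + L ^+ 2 / alpha * (ln (G + 1) + 1).
Proof.
move=> G_ge0; rewrite /regret_potential.
have weight_le : 2 * eps ^+ 2 * dist_weight G <= eps * L * (Num.sqrt 2 / 2 * Num.sqrt G).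
  have -> : eps * L * (Num.sqrt 2 / 2 * Num.sqrt G)
      = 2 * eps ^+ 2 * (alpha / 4 * (X * Num.sqrt G)).
    by rewrite /X; field; rewrite !gt_eqF.
  rewrite /dist_weight; apply: ler_wpM2l; first by rewrite mulr_ge0 ?sqr_ge0.
  by apply: ler_wpM2l; [rewrite divr_ge0 // ltW | exact: sqrt_cap_le_sqrt].
have := ler_wpM2l (mulr_ge0 (ltW eps_gt0) (ltW L_gt0)) (sqrt_potential_le _ G_ge0).
have := ler_wpM2l (divr_ge0 (sqr_ge0 L) (ltW alpha_gt0)) (log_potential_le _ G_ge0).
lra.
Qed.

End Schedule.

Lemma cumG0 {R : realType} (g : nat -> R) : cumG g 0 = 0.
Proof. by rewrite /cumG big_geq. Qed.

Lemma cumGS {R : realType} (g : nat -> R) n : cumG g n.+1 = cumG g n + g n.+1.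
Proof. by rewrite /cumG big_nat_recr. Qed.

Section OnlineGradientDescent.
Context {R : realType} {d : nat}.
Context {K : set 'rV[R]_d} {alpha eps L : R} {T : nat}.
Context {ell : nat -> 'rV[R]_d -> R} {g : nat -> R} {grad x : nat -> 'rV[R]_d}.
Context {xs : 'rV[R]_d}.
Hypotheses (convK : convex_set_rV K)
  (alpha_gt0 : 0 < alpha) (eps_gt0 : 0 < eps) (L_gt0 : 0 < L)
  (ell_nsc : forall t, (1 <= t <= T)%N -> nearly_strongly_convex K alpha eps (ell t))
  (g01 : forall t, (1 <= t <= T)%N -> 0 <= g t <= 1)
  (Kx1 : K (x 1%N))
  (grad_sub : forall t, (1 <= t <= T)%N ->
     is_subgradient K (ell t) (x t) (grad t) /\ enorm (grad t) <= L)
  (x_proj : forall t, (1 <= t <= T)%N ->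
     is_proj K (x t - (Rprime alpha eps L (cumG g t) * g t) *: grad t) (x t.+1))
  (Kxs : K xs).

Lemma ogd_iterate_in_K t : (1 <= t <= T.+1)%N -> K (x t).
Proof.
case: t => [//|[//|t]] /andP[_ tT].
by have [] := x_proj t.+1 tT.
Qed.

Lemma cumG_ge0 n : (n <= T)%N -> 0 <= cumG g n.
Proof.
move=> nT; rewrite /cumG big_nat_cond; apply: sumr_ge0 => t /andP[/andP[t_ge1 tn] _].
have tT : (1 <= t <= T)%N by rewrite t_ge1 (leq_trans _ nT) // -ltnS.
by have /andP[] := g01 t tT.
Qed.

Let Q t := enorm (x t - xs) ^+ 2.

Lemma ogd_step n : (n < T)%N ->
  g n.+1 * (ell n.+1 (x n.+1) - ell n.+1 xs)
  + dist_weight alpha eps L (cumG g n.+1) * Q n.+2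
  - dist_weight alpha eps L (cumG g n) * Q n.+1
    <= regret_potential alpha eps L (cumG g n.+1)
       - regret_potential alpha eps L (cumG g n).
Proof.
move=> nT; have tT : (1 <= n.+1 <= T)%N by [].
have dist := proj_step_dist convK (x_proj _ tT) Kxs.
have [subg gradL] := grad_sub _ tT.
have loss := nearly_strongly_convex_gap (ell_nsc _ tT) (ogd_iterate_in_K n.+1 (ltnW nT)) Kxs subg.
have g01t := g01 _ tT; have /andP[g_ge0 _] := g01t.
rewrite cumGS in dist *; set G' := cumG g n in dist *; set gt := g n.+1 in dist *.
set eta := Rprime alpha eps L (G' + gt) in dist *.
set v := grad n.+1 in dist loss *; set w := x n.+1 - xs in dist loss *.
have dist' : Q n.+2 <= enorm w ^+ 2 - 2 * eta * gt * dotv v w + eta ^+ 2 * gt ^+ 2 * dotv v v.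
  by move: dist; rewrite /Q (enorm_sqr (x n.+2 - xs)) exprMn; lra.
have G'_ge0 : 0 <= G' := cumG_ge0 _ (ltnW nT).
have [ratio_le1 err_le] := schedule_step alpha_gt0 eps_gt0 L_gt0 G'_ge0 g01t.
have G'G : G' <= G' + gt by rewrite lerDl.
have lin : dotv v w <= L * enorm w.
  by apply: le_trans (dotv_le_enorm v w) _; rewrite ler_wpM2r ?enorm_ge0.
have N_le : dotv v v <= L ^+ 2.
  by rewrite -enorm_sqr; have := enorm_ge0 v; nra.
have := potential_step alpha_gt0 eps_gt0 L_gt0 (Q' := Q n.+2) g_ge0 (enorm_ge0 w) N_le
  (dist_weight_ge0 alpha_gt0 eps_gt0 L_gt0 G'_ge0)
  (dist_weight_mono alpha_gt0 eps_gt0 L_gt0 G'_ge0 G'G)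
  (dist_weight_increment alpha_gt0 G'_ge0 g_ge0)
  (ltW (Rprime_gt0 alpha_gt0 eps_gt0 L_gt0 _)) ratio_le1 dist' loss lin.
rewrite /schedule_ratio -/eta -/gt in ratio_le1 err_le *.
rewrite /regret_potential /potential_gain /Q -/w in err_le *.
lra.
Qed.

Lemma ogd_potential_bound n : (n <= T)%N ->
  \sum_(1 <= t < n.+1) g t * (ell t (x t) - ell t xs)
  + dist_weight alpha eps L (cumG g n) * Q n.+1
    <= regret_potential alpha eps L (cumG g n).
Proof.
elim: n => [_ | n IH nT].
  by rewrite big_geq // cumG0 dist_weight0 regret_potential0 mul0r addr0.
rewrite big_nat_recr //=.
have := ogd_step n nT; have := IH (ltnW nT); lra.
Qed.

End OnlineGradientDescent.

Theorem theorem13 (R : realType) (d : nat) (K : set 'rV[R]_d)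
  (alpha eps L : R) (T : nat) (ell : nat -> 'rV[R]_d -> R) (g : nat -> R)
  (grad : nat -> 'rV[R]_d) (x : nat -> 'rV[R]_d) :
  closed K -> convex_set_rV K ->
  0 < alpha -> 0 < eps -> 0 < L ->
  (forall t, (1 <= t <= T)%N -> nearly_strongly_convex K alpha eps (ell t)) ->
  (forall t, (1 <= t <= T)%N -> 0 <= g t <= 1) ->
  K (x 1%N) ->
  (forall t, (1 <= t <= T)%N ->
     is_subgradient K (ell t) (x t) (grad t) /\ enorm (grad t) <= L) ->
  (forall t, (1 <= t <= T)%N ->
     is_proj K (x t - (Rprime alpha eps L (cumG g t) * g t) *: grad t) (x t.+1)) ->
  forall xs, K xs ->
    \sum_(1 <= t < T.+1) g t * (ell t (x t) - ell t xs)
      <= 2 * Num.sqrt 2 * eps * L * Num.sqrt (cumG g T)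
         + L ^+ 2 / alpha * (ln (cumG g T + 1) + 1).
Proof.
(* closedness only guarantees that the projections exist; here they are given *)
move=> _ convK alpha_gt0 eps_gt0 L_gt0 ell_nsc g01 Kx1 grad_sub x_proj xs Kxs.
have GT_ge0 := cumG_ge0 g01 T (leqnn T).
have := ogd_potential_bound convK alpha_gt0 eps_gt0 L_gt0 ell_nsc g01 Kx1 grad_sub x_proj Kxs
  T (leqnn T).
have := regret_potential_le alpha_gt0 eps_gt0 L_gt0 GT_ge0.
have := mulr_ge0 (dist_weight_ge0 alpha_gt0 eps_gt0 L_gt0 GT_ge0) (sqr_ge0 (enorm (x T.+1 - xs))).
lra.
Qed.
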